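(* Let $\mathcal{P}$ be a collection of cells. Let $a=(i,j)$, $b=(k,l)$ and $\delta=(m,n)$ with $i<m<k$ and $j<n<l$, and suppose $[a,b]$ is an inner interval of $\mathcal{P}$ (hence so is $[\alpha,\beta]$ with $\alpha=(i,n)$, $\beta=(m,l)$, whose upper left corner $\gamma$ equals the upper left corner $c=(i,l)$ of $[a,b]$). Put $d=(k,j)$, $h=(m,j)$, $r=(k,n)$. Let $<^{\mathsf{P}}$ be a $\mathsf{P}$-order on $V(\mathcal{P})$ and suppose that the leading monomials of $f_{a,b}$ and $f_{\alpha,\beta}$ with respect to $<^{\mathsf{P}}_{\mathrm{lex}}$ are not coprime. Then $S(f_{a,b},f_{\alpha,\beta})$ reduces to $0$ modulo $\mathcal{G}$ with respect to $<^{\mathsf{P}}_{\mathrm{lex}}$ if and only if one of the following holds: (1) $x_dx_\alpha x_\beta<^{\mathsf{P}}_{\mathrm{lex}}x_\delta x_ax_b$, and ($h,\alpha<^{\mathsf{P}}a$ or $h,\alpha<^{\mathsf{P}}\delta$); (2) $x_dx_\alpha x_\beta<^{\mathsf{P}}_{\mathrm{lex}}x_\delta x_ax_b$, and ($r,\beta<^{\mathsf{P}}\delta$ or $r,\beta<^{\mathsf{P}}b$); (3) $x_\delta x_ax_b<^{\mathsf{P}}_{\mathrm{lex}}x_dx_\alpha x_\beta$, and ($r,a<^{\mathsf{P}}\alpha$ or $r,a<^{\mathsf{P}}d$); (4) $x_\delta x_ax_b<^{\mathsf{P}}_{\mathrm{lex}}x_dx_\alpha x_\beta$, and ($h,b<^{\mathsf{P}}d$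 or $h,b<^{\mathsf{P}}\beta$).
   Context: For $a=(i,j), b=(k,l)\in\mathbb{Z}^2$ with $a\le b$ componentwise, the interval $[a,b]=\{(m,n)\in\mathbb{Z}^2: i\le m\le k,\ j\le n\le l\}$; it is proper if $i<k$ and $j<l$, in which case $a,b$ are its diagonal corners and $(i,l)$ (upper left), $(k,j)$ (lower right) its anti-diagonal corners. A cell is a proper interval $[v,v+(1,1)]$; its vertices are its four corners. A collection of cells $\mathcal{P}$ is a nonempty finite set of cells; $V(\mathcal{P})$ is the set of all vertices of its cells. A proper interval $[a,b]$ is an inner interval of $\mathcal{P}$ if every cell $[v,v+(1,1)]\subseteq[a,b]$ belongs to $\mathcal{P}$. Let $K$ be a field and $S=K[x_v: v\in V(\mathcal{P})]$. For an inner interval $[a,b]$ with upper left corner $c$ and lower right corner $d$, put $f_{a,b}=x_ax_b-x_cx_d$; $\mathcal{G}$ is the set of all such inner 2-minors of $\mathcal{P}$. A $\mathsf{P}$-order is a total order $<^{\mathsf{P}}$ on $V(\mathcal{P})$; $<^{\mathsf{P}}_{\mathrm{lex}}$ is the lexicographic monomial order on $S$ with $x_u<x_v\iff u<^{\mathsf{P}}v$. For vertices $u,v,w$, ''$u,v<^{\mathsf{P}}w$'' means $u<^{\mathsf{P}}w$ and $v<^{\mathsf{P}}w$. *)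

From HB Require Import structures.
From mathcomp Require Import all_boot all_algebra finmap.
From mathcomp.multinomials Require Import monalg.

Set Implicit Arguments.
Unset Strict Implicit.
Unset Printing Implicit Defensive.

Import GRing.Theory.
Local Open Scope ring_scope.


Definition vertex := (int * int)%type.

(* A cell [v, v+(1,1)] is represented by its lower-left corner v;
   a collection of cells is a finite (nonempty) set of such corners. *)
Definition cell_vertices (v : vertex) : seq vertex :=
  [:: v; (v.1 + 1, v.2); (v.1, v.2 + 1); (v.1 + 1, v.2 + 1)].

Definition VP (P : {fset vertex}) : seq vertex :=
  flatten [seq cell_vertices v | v <- enum_fset P].

Definition inner_interval (P : {fset vertex}) (a b : vertex) : Prop :=
  [/\ a.1 < b.1, a.2 < b.2 &
      forall v : vertex, a.1 <= v.1 -> v.1 + 1 <= b.1 ->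
                         a.2 <= v.2 -> v.2 + 1 <= b.2 -> v \in P].

(* A P-order: a strict total order on V(P) (given as a relation on Z^2,
   only its restriction to V(P) matters). *)
Definition P_order (P : {fset vertex}) (ltP : rel vertex) : Prop :=
  [/\ forall u, u \in VP P -> ~~ ltP u u,
      forall u v w, u \in VP P -> v \in VP P -> w \in VP P ->
                    ltP u v -> ltP v w -> ltP u w &
      forall u v, u \in VP P -> v \in VP P -> u != v -> ltP u v || ltP v u].

(* Monomials and polynomials in the variables x_v, v in Z^2;
   the ring S consists of the polynomials using only variables in V(P). *)
Notation monom := (cmonom vertex).
Definition polyS (K : fieldType) := {malg K[monom]}.

Definition var (K : fieldType) (v : vertex) : polyS K := << ucm v >>.

Definition in_S (P : {fset vertex}) (K : fieldType) (f : polyS K) : Prop :=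
  forall m, m \in msupp f -> forall w, (m w != 0)%N -> w \in VP P.

Definition lex_lt (P : {fset vertex}) (ltP : rel vertex) (m1 m2 : monom) : bool :=
  has (fun v => (m1 v < m2 v)%N &&
                all (fun w => ltP v w ==> (m1 w == m2 w)) (VP P)) (VP P).

(* leading monomial in(f) (the largest monomial of the support; 1 if f = 0) *)
Definition lead_mon (P : {fset vertex}) (ltP : rel vertex) (K : fieldType)
    (f : polyS K) : monom :=
  odflt (@onecm vertex)
    (omap val [pick m : msupp f |
       all (fun m' => (m' == val m) || lex_lt P ltP m' (val m)) (msupp f)]).

Definition lead_coef (P : {fset vertex}) (ltP : rel vertex) (K : fieldType)
    (f : polyS K) : K := f@_(lead_mon P ltP f).

Definition lcm_mon (u w : monom) : monom :=
  [cmonom maxn (u i) (w i) | i in (finsupp u `|` finsupp w)%fset]%M.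

Definition coprime_mon (u w : monom) : Prop :=
  forall v : vertex, u v = 0%N \/ w v = 0%N.

Definition spoly (P : {fset vertex}) (ltP : rel vertex) (K : fieldType)
    (f g : polyS K) : polyS K :=
  let u := lead_mon P ltP f in
  let w := lead_mon P ltP g in
  let l := lcm_mon u w in
  (lead_coef P ltP f)^-1 *: (<< divcm l u >> * f)
  - (lead_coef P ltP g)^-1 *: (<< divcm l w >> * g).

(* f_{a,b} = x_a x_b - x_c x_d, c = upper left, d = lower right corner *)
Definition minor2 (K : fieldType) (a b : vertex) : polyS K :=
  var K a * var K b - var K (a.1, b.2) * var K (b.1, a.2).

Definition in_G (P : {fset vertex}) (K : fieldType) (g : polyS K) : Prop :=
  exists a b, inner_interval P a b /\ g = minor2 K a b.

(* f reduces to 0 modulo G (Herzog-Hibi): f has a standard expression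
   f = sum_i h_i g_i, g_i in G, h_i in S, with in(h_i g_i) <= in(f)
   whenever h_i g_i <> 0, and remainder 0. *)
Definition reduces_to_zero (P : {fset vertex}) (ltP : rel vertex)
    (K : fieldType) (f : polyS K) : Prop :=
  exists (n : nat) (h g : 'I_n -> polyS K),
    [/\ forall i, in_G P (g i),
        forall i, in_S P (h i),
        f = \sum_(i < n) h i * g i &
        forall i, h i * g i != 0 ->
          (lead_mon P ltP (h i * g i) == lead_mon P ltP f)
          || lex_lt P ltP (lead_mon P ltP (h i * g i)) (lead_mon P ltP f)].

(* Both leading terms contain x_c only if both minors have their anti-diagonal
   leading terms x_c x_d and x_c x_delta; then
   S(f_ab, f_alpha beta) = x_d x_alpha x_beta - x_delta x_a x_b.  If S reduces to 0,
   its leading term, a product of three distinct variables, is a multiple of the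
   leading term of an inner 2-minor.  The only such minors are f_{a,delta} and
   f_{delta,b} when x_delta x_a x_b leads, and f_{a,r} and f_{h,b} when
   x_d x_alpha x_beta leads, and each has the required leading term exactly under
   one of the stated order conditions.  Conversely,
   S = - x_b f_{a,delta} - x_alpha f_{h,b} = - x_a f_{delta,b} - x_beta f_{a,r},
   and under the corresponding condition one of these sums is a standard expression. *)

From Pilot Require Import Defs.
From HB Require Import structures.
From mathcomp Require Import all_boot all_algebra finmap.
From mathcomp.multinomials Require Import monalg.
From mathcomp Require Import zify ring.

Set Implicit Arguments.
Unset Strict Implicit.
Unset Printing Implicit Defensive.

Import GRing.Theory.
Local Open Scope ring_scope.

Lemma exists_max_seq (T : eqType) (A : T -> Prop) (lt : rel T) (s : seq T) :
  (forall x, A x -> ~~ lt x x) ->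
  (forall x y z, A x -> A y -> A z -> lt x y -> lt y z -> lt x z) ->
  (forall x y, A x -> A y -> x != y -> lt x y || lt y x) ->
  (forall x, x \in s -> A x) -> s != [::] ->
  exists2 x, x \in s & forall y, y \in s -> (y == x) || lt y x.
Proof.
move=> irr trans total; elim: s => // x [|y s] IH sA _.
  by exists x; rewrite ?inE // => y; rewrite inE => ->.
have xA : A x by apply: sA; rewrite inE eqxx.
have [z z_in z_max] : exists2 z, z \in y :: s & forall t, t \in y :: s -> (t == z) || lt t z.
  by apply: IH => // t t_in; apply: sA; rewrite inE t_in orbT.
have zA : A z by apply: sA; rewrite inE z_in orbT.
have [->|neq_xz] := eqVneq x z.
  by exists z => [|t]; rewrite inE ?eqxx // => /orP[->|/z_max].
case/orP: (total x z xA zA neq_xz) => [lt_xz|lt_zx].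
  exists z => [|t]; first by rewrite inE z_in orbT.
  by rewrite inE => /orP[/eqP->|/z_max //]; rewrite lt_xz orbT.
exists x => [|t]; first by rewrite inE eqxx.
rewrite inE => /orP[->//|t_in]; have tA : A t by apply: sA; rewrite inE t_in orbT.
case/orP: (z_max t t_in) => [/eqP->|lt_tz]; first by rewrite lt_zx orbT.
by rewrite (trans t z x tA zA xA lt_tz lt_zx) orbT.
Qed.

Definition mon_in_VP (P : {fset vertex}) (m : monom) : Prop :=
  forall v, (m v != 0)%N -> v \in VP P.

Definition lex_le (P : {fset vertex}) (ltP : rel vertex) (m1 m2 : monom) : bool :=
  (m1 == m2) || lex_lt P ltP m1 m2.

Lemma mon_in_VP_ucm P v : v \in VP P -> mon_in_VP P (ucm v).
Proof. by move=> vP w; rewrite ucmE; have [<-|] := eqVneq v w. Qed.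

Lemma mon_in_VP_mul P m1 m2 :
  mon_in_VP P m1 -> mon_in_VP P m2 -> mon_in_VP P (mulcm m1 m2).
Proof. by move=> m1P m2P v; rewrite mulcmE addn_eq0 negb_and => /orP[/m1P|/m2P]. Qed.

Section LexOrder.

Variables (P : {fset vertex}) (ltP : rel vertex).

Lemma lex_ltI (m1 m2 : monom) v : v \in VP P -> (m1 v < m2 v)%N ->
  (forall w, w \in VP P -> ltP v w -> m1 w = m2 w) -> lex_lt P ltP m1 m2.
Proof.
move=> vP lt_v eq_above; apply/hasP; exists v; rewrite // lt_v /=.
by apply/allP => w wP; apply/implyP => /(eq_above w wP) ->.
Qed.

Lemma lex_lt_witness (m1 m2 : monom) : lex_lt P ltP m1 m2 ->
  exists v, [/\ v \in VP P, (m1 v < m2 v)%N &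
                forall w, w \in VP P -> ltP v w -> m1 w = m2 w].
Proof.
case/hasP => v vP /andP[lt_v /allP eq_above]; exists v; split => // w wP lt_vw.
by move: (eq_above w wP); rewrite lt_vw => /eqP.
Qed.

Lemma lex_lt_irr (m : monom) : ~~ lex_lt P ltP m m.
Proof. by apply/negP => /lex_lt_witness [v [_ /[!ltnn]]]. Qed.

Lemma lex_lt_mulr (m1 m2 w : monom) :
  lex_lt P ltP m1 m2 -> lex_lt P ltP (mulcm m1 w) (mulcm m2 w).
Proof.
case/lex_lt_witness => v [vP lt_v eq_above]; apply: (lex_ltI vP).
  by rewrite !mulcmE ltn_add2r.
by move=> u uP lt_vu; rewrite !mulcmE eq_above.
Qed.

Lemma lex_lt_mull (m1 m2 w : monom) :
  lex_lt P ltP m1 m2 -> lex_lt P ltP (mulcm w m1) (mulcm w m2).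
Proof. by rewrite ![mulcm w _]mulcmC; apply: lex_lt_mulr. Qed.

Lemma lex_lt_mull_eq (m1 m2 w x1 x2 : monom) : x1 = mulcm w m1 -> x2 = mulcm w m2 ->
  lex_lt P ltP m1 m2 -> lex_lt P ltP x1 x2.
Proof. by move=> -> ->; apply: lex_lt_mull. Qed.

Lemma lex_lexx (m : monom) : lex_le P ltP m m.
Proof. by rewrite /lex_le eqxx. Qed.

Lemma lex_ltW (m1 m2 : monom) : lex_lt P ltP m1 m2 -> lex_le P ltP m1 m2.
Proof. by rewrite /lex_le => ->; rewrite orbT. Qed.

Hypothesis ordP : P_order P ltP.

Lemma ltP_asym u v : u \in VP P -> v \in VP P -> ltP u v -> ~~ ltP v u.
Proof.
case: ordP => irr trans _ uP vP lt_uv; apply/negP => lt_vu.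
by move: (irr u uP); rewrite (trans u v u uP vP uP lt_uv lt_vu).
Qed.

Lemma lex_lt_asym (m1 m2 : monom) : lex_lt P ltP m1 m2 -> ~~ lex_lt P ltP m2 m1.
Proof.
case: ordP => _ _ total /lex_lt_witness [v [vP lt_v eq_v]].
apply/negP => /lex_lt_witness [u [uP lt_u eq_u]].
have [eq_vu|neq_vu] := eqVneq v u; first by move: lt_u; rewrite -eq_vu ltnNge ltnW.
case/orP: (total v u vP uP neq_vu) => [/(eq_v u uP)|/(eq_u v vP)] eq_m.
  by move: lt_u; rewrite eq_m ltnn.
by move: lt_v; rewrite eq_m ltnn.
Qed.

Lemma lex_lt_trans (m1 m2 m3 : monom) :
  lex_lt P ltP m1 m2 -> lex_lt P ltP m2 m3 -> lex_lt P ltP m1 m3.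
Proof.
case: ordP => _ trans total /lex_lt_witness [v [vP lt_v eq_v]].
case/lex_lt_witness => u [uP lt_u eq_u].
have [eq_vu|neq_vu] := eqVneq v u.
  apply: (lex_ltI vP); first by rewrite (ltn_trans lt_v) // eq_vu.
  by move=> w wP lt_vw; rewrite eq_v // eq_u // -eq_vu.
case/orP: (total v u vP uP neq_vu) => [lt_vu|lt_uv].
  apply: (lex_ltI uP); first by rewrite eq_v.
  by move=> w wP lt_uw; rewrite eq_v ?eq_u //; apply: trans lt_vu lt_uw.
apply: (lex_ltI vP); first by rewrite -eq_u.
by move=> w wP lt_vw; rewrite eq_v ?eq_u //; apply: trans lt_uv lt_vw.
Qed.

Lemma lex_lt_total (m1 m2 : monom) : mon_in_VP P m1 -> mon_in_VP P m2 -> m1 != m2 ->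
  lex_lt P ltP m1 m2 || lex_lt P ltP m2 m1.
Proof.
case: (ordP) => irr trans total m1P m2P neq_m12.
pose diff := [seq w <- VP P | m1 w != m2 w].
have mem_diff w : w \in VP P -> (w \in diff) = (m1 w != m2 w).
  by move=> wP; rewrite mem_filter wP andbT.
have diff_nil : diff != [::].
  apply: contraNneq neq_m12 => diff0; apply/cmP => w.
  have [wP|wNP] := boolP (w \in VP P).
    by apply/eqP/negPn; rewrite -mem_diff // diff0.
  have m1w : m1 w = 0%N by apply/eqP; apply: contraNT wNP => /m1P.
  have m2w : m2 w = 0%N by apply/eqP; apply: contraNT wNP => /m2P.
  by rewrite m1w m2w.
have diff_VP w : w \in diff -> w \in VP P by rewrite mem_filter => /andP[].
have [v v_in v_max] := exists_max_seq irr trans total diff_VP diff_nil.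
move: v_in; rewrite mem_filter => /andP[neq_v vP].
have eq_above w : w \in VP P -> ltP v w -> m1 w = m2 w.
  move=> wP lt_vw; apply/eqP/negPn; rewrite -mem_diff //.
  apply/negP => /v_max /orP[/eqP eq_wv|lt_wv].
    by move: lt_vw; rewrite eq_wv (negbTE (irr v vP)).
  by move: (ltP_asym vP wP lt_vw); rewrite lt_wv.
case: ltngtP neq_v => // [lt_v|lt_v] _.
  by rewrite (lex_ltI vP lt_v eq_above).
by rewrite (lex_ltI vP lt_v) ?orbT // => w wP /(eq_above w wP).
Qed.

End LexOrder.

Definition mon (K : fieldType) (m : monom) : polyS K := << m >>.
Definition cm2 (p q : vertex) : monom := mulcm (ucm p) (ucm q).
Definition cm3 (p q r : vertex) : monom := mulcm (cm2 p q) (ucm r).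
Definition antidiag (a b : vertex) : monom := cm2 (a.1, b.2) (b.1, a.2).

Lemma monM K (m1 m2 : monom) : mon K (mulcm m1 m2) = mon K m1 * mon K m2.
Proof. by rewrite /mon malgM_def fgmulUU mulr1. Qed.

Lemma cm2E p q v : cm2 p q v = ((p == v) + (q == v))%N.
Proof. by rewrite mulcmE !ucmE. Qed.

Lemma cm2C p q : cm2 p q = cm2 q p.
Proof. exact: mulcmC. Qed.

Lemma cm2_neq p q r s : p != r -> p != s -> cm2 p q != cm2 r s.
Proof.
move=> neq_pr neq_ps; apply/negP => /eqP /(congr1 (fun m : monom => m p)).
by rewrite !cm2E eqxx (eq_sym r) (eq_sym s) (negbTE neq_pr) (negbTE neq_ps).
Qed.

Lemma coprime_cm2 p q r s : p != r -> p != s -> q != r -> q != s ->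
  coprime_mon (cm2 p q) (cm2 r s).
Proof.
move=> neq_pr neq_ps neq_qr neq_qs t; rewrite !cm2E (eq_sym r) (eq_sym s).
have [<-|_] := eqVneq p t; first by right; rewrite (negbTE neq_pr) (negbTE neq_ps).
have [<-|_] := eqVneq q t; first by right; rewrite (negbTE neq_qr) (negbTE neq_qs).
by left.
Qed.

Lemma mon_in_VP_cm2 P p q : p \in VP P -> q \in VP P -> mon_in_VP P (cm2 p q).
Proof. by move=> pP qP; apply: mon_in_VP_mul; apply: mon_in_VP_ucm. Qed.

Lemma mcoeff_mon K (p m : monom) : (mon K p)@_m = (p == m)%:R.
Proof. exact: mcoeffU1. Qed.

(* Here and below [erewrite] matches syntactically, where ssreflect's [rewrite]
   would try to unify distinct polynomials by unfolding them, which is very slow. *)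
Lemma mcoeff_binom K (p q m : monom) :
  (mon K p - mon K q)@_m = (p == m)%:R - (q == m)%:R.
Proof. by rewrite mcoeffB; erewrite !mcoeff_mon. Qed.

Lemma msupp_binom K (p q m : monom) :
  m \in msupp (mon K p - mon K q) -> m = p \/ m = q.
Proof.
rewrite -mcoeff_neq0 mcoeff_binom.
by have [->|_] := eqVneq p m; [left | have [->|_] := eqVneq q m; [right | rewrite subrr eqxx]].
Qed.

Lemma mem_msupp_binoml K (p q : monom) : p != q -> p \in msupp (mon K p - mon K q).
Proof.
by move=> neq_pq; rewrite -mcoeff_neq0 mcoeff_binom eqxx (eq_sym q p) (negbTE neq_pq) subr0 oner_eq0.
Qed.

Lemma mem_msupp_binomr K (p q : monom) : p != q -> q \in msupp (mon K p - mon K q).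
Proof.
by move=> neq_pq; rewrite -opprB msuppN; apply: mem_msupp_binoml; apply: contraNneq neq_pq => ->.
Qed.

Lemma in_S_mul P K (f g : polyS K) : in_S P f -> in_S P g -> in_S P (f * g).
Proof. by move=> fS gS _ /msuppM_le [m1 [m2 [/fS m1P /gS m2P ->]]]; apply: mon_in_VP_mul. Qed.

Lemma in_S_oppvar P K v : v \in VP P -> in_S P (- var K v).
Proof.
move=> vP m; rewrite msuppN -mcoeff_neq0 -[var K v]/(mon K (ucm v)); erewrite mcoeff_mon.
by have [<- _|_] := eqVneq (ucm v) m; [apply: mon_in_VP_ucm | rewrite mulr0n eqxx].
Qed.

Section LeadingMonomial.

Variables (P : {fset vertex}) (ltP : rel vertex) (K : fieldType).
Hypothesis ordP : P_order P ltP.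

Definition is_lead (f : polyS K) (m : monom) : Prop :=
  m \in msupp f /\ forall m', m' \in msupp f -> lex_le P ltP m' m.

Lemma lead_monE f m : is_lead f m -> lead_mon P ltP f = m.
Proof.
move=> [m_in m_max]; rewrite /lead_mon; case: pickP => [x|none] /=.
  move=> /allP/(_ m m_in) /orP[/eqP//|lt_mx].
  case/orP: (m_max _ (fsvalP x)) => [/eqP//|lt_xm].
  by move: (lex_lt_asym ordP lt_xm); rewrite lt_mx.
by move: (none [` m_in]%fset) => /= /negP; case; apply/allP => m' /m_max.
Qed.

Lemma lead_monP f : f != 0 -> in_S P f -> is_lead f (lead_mon P ltP f).
Proof.
move=> f_neq0 fS.
have supp_nil : (msupp f : seq monom) != [::].
  apply: contraNneq f_neq0 => supp0; rewrite -msupp_eq0; apply/eqP/fsetP => m.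
  by rewrite in_fset0 -[m \in msupp f]/(m \in (msupp f : seq monom)) supp0.
have [m m_in m_max] := exists_max_seq (fun m _ => lex_lt_irr P ltP m)
  (fun m1 m2 m3 _ _ _ => @lex_lt_trans P ltP ordP m1 m2 m3)
  (@lex_lt_total P ltP ordP) fS supp_nil.
by rewrite (@lead_monE _ m) //; split.
Qed.

Lemma is_lead_binomr (p q : monom) :
  lex_lt P ltP p q -> is_lead (mon K p - mon K q) q.
Proof.
move=> lt_pq; have neq_pq : p != q by apply: contraTneq lt_pq => ->; apply: lex_lt_irr.
split; first exact: mem_msupp_binomr.
by move=> m /msupp_binom [->|->]; [apply: lex_ltW | apply: lex_lexx].
Qed.

Lemma is_lead_binoml (p q : monom) :
  lex_lt P ltP q p -> is_lead (mon K p - mon K q) p.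
Proof.
move=> lt_qp; have neq_pq : p != q by apply: contraTneq lt_qp => ->; apply: lex_lt_irr.
split; first exact: mem_msupp_binoml.
by move=> m /msupp_binom [->|->]; [apply: lex_lexx | apply: lex_ltW].
Qed.

Lemma lead_mon_mul (h g : polyS K) : h != 0 -> g != 0 -> in_S P h -> in_S P g ->
  is_lead (h * g) (mulcm (lead_mon P ltP h) (lead_mon P ltP g)).
Proof.
move=> h_neq0 g_neq0 hS gS.
have [u_in u_max] := lead_monP h_neq0 hS; have [v_in v_max] := lead_monP g_neq0 gS.
set u := lead_mon P ltP h in u_in u_max *; set v := lead_mon P ltP g in v_in v_max *.
have le_uv k1 k2 : k1 \in msupp h -> k2 \in msupp g ->
    ((k1 == u) && (k2 == v)) || lex_lt P ltP (mulcm k1 k2) (mulcm u v).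
  move=> /u_max /orP[/eqP->|lt1] /v_max /orP[/eqP->|lt2].
  - by rewrite !eqxx.
  - by rewrite lex_lt_mull ?orbT.
  - by rewrite lex_lt_mulr ?orbT.
  by rewrite (lex_lt_trans ordP (lex_lt_mulr k2 lt1) (lex_lt_mull u lt2)) orbT.
have uv_eq k1 k2 : k1 \in msupp h -> k2 \in msupp g -> mulcm k1 k2 = mulcm u v ->
    (k1 == u) && (k2 == v).
  move=> k1_in k2_in eq_m; move: (le_uv _ _ k1_in k2_in).
  by rewrite eq_m (negbTE (lex_lt_irr _ _ _)) orbF.
split.
  rewrite -mcoeff_neq0 mcoeffMl (bigD1_seq u) ?fset_uniq //= (bigD1_seq v) ?fset_uniq //=.
  rewrite eqxx mulr1n big1_seq ?addr0 => [|k2 /andP[neq2 k2_in]]; last first.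
    by case: eqP => // /(uv_eq _ _ u_in k2_in); rewrite (negbTE neq2) andbF.
  rewrite big1_seq ?addr0 => [|k1 /andP[neq1 k1_in]]; last first.
    rewrite big1_seq // => k2 /andP[_ k2_in].
    by case: eqP => // /(uv_eq _ _ k1_in k2_in); rewrite (negbTE neq1).
  by rewrite mulf_neq0 // mcoeff_neq0.
move=> _ /msuppM_le [k1 [k2 [k1_in k2_in ->]]].
by case/orP: (le_uv _ _ k1_in k2_in) => [/andP[/eqP-> /eqP->]|]; [apply: lex_lexx | apply: lex_ltW].
Qed.

End LeadingMonomial.

Lemma inner_interval_VP P (a b x : vertex) : inner_interval P a b ->
  a.1 <= x.1 <= b.1 -> a.2 <= x.2 <= b.2 -> x \in VP P.
Proof.
case: a b x => [a1 a2] [b1 b2] [x1 x2] [/= lt1 lt2 cellsP] /andP[le1 le1'] /andP[le2 le2'].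
pose v : vertex := (if x1 == b1 then x1 - 1 else x1, if x2 == b2 then x2 - 1 else x2).
have vP : v \in P.
  by apply: cellsP; rewrite /v /=; case: (eqVneq x1 b1); case: (eqVneq x2 b2); lia.
apply/flatten_mapP; exists v => //.
by rewrite /cell_vertices /v /= !inE !xpair_eqE; case: (eqVneq x1 b1); case: (eqVneq x2 b2); lia.
Qed.

Lemma inner_subinterval P (a b a' b' : vertex) : inner_interval P a b ->
  a.1 <= a'.1 -> a'.1 < b'.1 -> b'.1 <= b.1 ->
  a.2 <= a'.2 -> a'.2 < b'.2 -> b'.2 <= b.2 -> inner_interval P a' b'.
Proof. by move=> [_ _ cellsP] *; split => // v *; apply: cellsP; lia. Qed.

Lemma cm2_neq_antidiag P (a b : vertex) : inner_interval P a b -> cm2 a b != antidiag a b.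
Proof. by case: a b => [a1 a2] [b1 b2] [/= *]; apply: cm2_neq; rewrite /= xpair_eqE; lia. Qed.

Lemma minor2E K a b : minor2 K a b = mon K (cm2 a b) - mon K (antidiag a b).
Proof. by rewrite /antidiag /cm2 !monM. Qed.

Lemma var_minor2E K w a b : - var K w * minor2 K a b =
  mon K (mulcm (ucm w) (antidiag a b)) - mon K (mulcm (ucm w) (cm2 a b)).
Proof. by rewrite minor2E mulNr mulrBr opprB /antidiag /cm2 !monM. Qed.

Lemma minor2_neq0 P K a b : inner_interval P a b -> minor2 K a b != 0.
Proof.
move=> inner_ab; apply: contraTneq (mem_msupp_binoml K (cm2_neq_antidiag inner_ab)).
by rewrite -minor2E => ->; rewrite msupp0 in_fset0.
Qed.

Lemma minor2_in_S P K a b : inner_interval P a b -> in_S P (minor2 K a b).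
Proof.
case: a b => [a1 a2] [b1 b2] inner_ab; have [/= lt1 lt2 _] := inner_ab.
have cornerP x y : (x == a1) || (x == b1) -> (y == a2) || (y == b2) -> (x, y) \in VP P.
  by move=> x_in y_in; apply: (inner_interval_VP inner_ab) => /=; lia.
by move=> m; rewrite minor2E => /msupp_binom [->|->]; apply: mon_in_VP_cm2; apply: cornerP;
  rewrite ?eqxx ?orbT.
Qed.

Lemma cm2_dvd_cm3 (w : monom) u v x y z : mulcm w (cm2 u v) = cm3 x y z ->
  uniq [:: x; y; z] -> u \in [:: x; y; z] /\ v \in [:: x; y; z].
Proof.
move=> eq_w uniq_xyz.
have eq_at t : (w t + ((u == t) + (v == t)) = (t \in [:: x; y; z]))%N.
  move/(congr1 (fun m : monom => m t)): eq_w; rewrite !mulcmE !ucmE => ->.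
  by rewrite -(count_uniq_mem t uniq_xyz) /= addn0 addnA.
split.
  by move: (eq_at u); rewrite eqxx addnCA; case: (u \in _).
by move: (eq_at v); rewrite eqxx addn1 addnS; case: (v \in _).
Qed.

Lemma lcm_monE (u w : monom) v : lcm_mon u w v = maxn (u v) (w v).
Proof.
by rewrite /lcm_mon cmE fsfun_fun in_fsetE; case: (finsuppP u); case: (finsuppP w).
Qed.

Lemma mon_cm3 K p q r : mon K (cm3 p q r) = var K p * var K q * var K r.
Proof. by rewrite /cm3 /cm2 !monM. Qed.

Lemma lead_coef_minor2 P ltP K a b : inner_interval P a b ->
  lead_mon P ltP (minor2 K a b) = antidiag a b -> Defs.lead_coef P ltP (minor2 K a b) = -1.
Proof.
move=> inner_ab lead_ab; rewrite /Defs.lead_coef lead_ab minor2E mcoeff_binom eqxx.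
by rewrite (negbTE (cm2_neq_antidiag inner_ab)) sub0r.
Qed.

Lemma lcm_monC (u w : monom) : lcm_mon u w = lcm_mon w u.
Proof. by apply/eqP/cmP => v; rewrite !lcm_monE maxnC. Qed.

Lemma divcm_lcm_cm2 (c e e' : vertex) : e != e' ->
  divcm (lcm_mon (cm2 c e) (cm2 c e')) (cm2 c e) = ucm e'.
Proof.
move=> neq_e; apply/eqP/cmP => v; rewrite divcmE lcm_monE !cm2E ucmE.
have : ~~ ((e == v) && (e' == v)).
  by apply: contra neq_e => /andP[/eqP-> /eqP->].
by case: (c == v); case: (e == v); case: (e' == v).
Qed.

Lemma spoly_common_corner P ltP K (f g : polyS K) (c d d' : vertex) :
  lead_mon P ltP f = cm2 c d -> lead_mon P ltP g = cm2 c d' ->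
  Defs.lead_coef P ltP f = -1 -> Defs.lead_coef P ltP g = -1 -> d != d' ->
  spoly P ltP f g = var K d * g - var K d' * f.
Proof.
move=> lead_f lead_g coef_f coef_g neq_d.
rewrite /spoly coef_f coef_g lead_f lead_g invrN1 [X in X - _]scaleN1r [X in _ - X]scaleN1r.
rewrite divcm_lcm_cm2 // lcm_monC divcm_lcm_cm2 1?eq_sym //.
by rewrite opprK addrC.
Qed.

Lemma spoly_minor2_antidiag P ltP K (a b al be : vertex) :
  inner_interval P a b -> inner_interval P al be ->
  (al.1, be.2) = (a.1, b.2) -> (b.1, a.2) != (be.1, al.2) ->
  lead_mon P ltP (minor2 K a b) = antidiag a b ->
  lead_mon P ltP (minor2 K al be) = antidiag al be ->
  spoly P ltP (minor2 K a b) (minor2 K al be) =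
    mon K (cm3 (b.1, a.2) al be) - mon K (cm3 (be.1, al.2) a b).
Proof.
move=> inner_ab inner_albe eq_c neq_d lead_ab lead_albe.
have lead_albe' : lead_mon P ltP (minor2 K al be) = cm2 (a.1, b.2) (be.1, al.2).
  by rewrite lead_albe /antidiag eq_c.
rewrite (spoly_common_corner lead_ab lead_albe' (lead_coef_minor2 inner_ab lead_ab)
  (lead_coef_minor2 inner_albe lead_albe) neq_d).
(* [ring] on [polyS K] itself would compare the variables by unfolding them. *)
have cancel_corner (R : comRingType) (xa xb xal xbe xc xd xd' : R) :
  xd * (xal * xbe - xc * xd') - xd' * (xa * xb - xc * xd) = xd * xal * xbe - xd' * xa * xb.
  by ring.
by rewrite /minor2 eq_c !mon_cm3; apply: cancel_corner.
Qed.

Lemma minor2_telescope K (M1 M2 : monom) w s a0 b0 a1 b1 :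
  mulcm (ucm w) (cm2 a0 b0) = M2 ->
  mulcm (ucm w) (antidiag a0 b0) = mulcm (ucm s) (cm2 a1 b1) ->
  mulcm (ucm s) (antidiag a1 b1) = M1 ->
  - var K w * minor2 K a0 b0 + - var K s * minor2 K a1 b1 = mon K M1 - mon K M2.
Proof.
move=> eq2 eq_mid eq1.
transitivity ((mon K (mulcm (ucm s) (cm2 a1 b1)) - mon K M2) +
              (mon K M1 - mon K (mulcm (ucm s) (cm2 a1 b1)))).
  by congr (_ + _); rewrite var_minor2E ?eq2 ?eq_mid ?eq1.
by rewrite addrC addrA subrK.
Qed.

Section MinorsAndReduction.

Variables (P : {fset vertex}) (ltP : rel vertex) (K : fieldType).
Hypothesis ordP : P_order P ltP.

Lemma lead_minor2 a b : inner_interval P a b ->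
  lead_mon P ltP (minor2 K a b) = cm2 a b /\ lex_lt P ltP (antidiag a b) (cm2 a b) \/
  lead_mon P ltP (minor2 K a b) = antidiag a b /\ lex_lt P ltP (cm2 a b) (antidiag a b).
Proof.
move=> inner_ab; have neq := cm2_neq_antidiag inner_ab.
case: (lead_monP ordP (minor2_neq0 K inner_ab) (minor2_in_S (K:=K) inner_ab)).
rewrite minor2E => /msupp_binom [->|->] lead_max; [left|right]; split=> //.
  by move: (lead_max _ (mem_msupp_binomr K neq)) => /orP[/eqP eq_anti|//]; rewrite eq_anti eqxx in neq.
by move: (lead_max _ (mem_msupp_binoml K neq)) => /orP[/eqP eq_anti|//]; rewrite eq_anti eqxx in neq.
Qed.

Lemma lex_lt_cm2 p q r s : uniq [:: p; q; r; s] ->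
  p \in VP P -> q \in VP P -> r \in VP P -> s \in VP P ->
  lex_lt P ltP (cm2 s r) (cm2 p q) = (ltP r p && ltP s p) || (ltP r q && ltP s q).
Proof.
rewrite [cm2 s r]cm2C.
have lt_cm2 p' q' r' s' : uniq [:: p'; q'; r'; s'] ->
    p' \in VP P -> q' \in VP P -> r' \in VP P -> s' \in VP P ->
    lex_lt P ltP (cm2 r' s') (cm2 p' q') -> (ltP r' p' && ltP s' p') || (ltP r' q' && ltP s' q').
  case: ordP => _ _ total /= uniq' p'P q'P r'P s'P /lex_lt_witness [v [vP lt_v eq_above]].
  move: uniq'; rewrite !inE !negb_or -!andbA => /and5P[_ neq_pr neq_ps neq_qr /and3P[neq_qs _ _]].
  have v_pq : (v == p') || (v == q').
    by move: lt_v; rewrite !cm2E (eq_sym p') (eq_sym q'); case: (v == p'); case: (v == q').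
  have below x : x \in VP P -> x != p' -> x != q' -> (cm2 r' s' x != 0)%N -> ltP x v.
    move=> xP neq_xp neq_xq x_in; have neq_xv : x != v by case/orP: v_pq => /eqP->.
    case/orP: (total x v xP vP neq_xv) => // /(eq_above x xP).
    by move: x_in; rewrite !cm2E (eq_sym p') (eq_sym q') (negbTE neq_xp) (negbTE neq_xq) => /eqP.
  have lt_rv : ltP r' v by apply: below; rewrite // 1?eq_sym // cm2E eqxx.
  have lt_sv : ltP s' v by apply: below; rewrite // 1?eq_sym // cm2E eqxx addn1.
  by case/orP: v_pq => /eqP eq_v; rewrite -eq_v lt_rv lt_sv ?orbT.
move=> uniq_pqrs pP qP rP sP; apply/idP/idP; first exact: lt_cm2.
have uniq_rspq : uniq [:: r; s; p; q] by rewrite (uniq_catC [:: r; s]).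
have neq : cm2 r s != cm2 p q.
  by apply: cm2_neq; move: uniq_rspq; rewrite /= !inE !negb_or => /and4P[/and3P[]].
move=> lt_rs; move: (lex_lt_total ordP (mon_in_VP_cm2 rP sP) (mon_in_VP_cm2 pP qP) neq).
case/orP => // /(lt_cm2 _ _ _ _ uniq_rspq rP sP pP qP).
case/orP => /andP[lt_p lt_q]; case/orP: lt_rs => /andP[lt_r lt_s].
- by move: (ltP_asym ordP pP rP lt_p); rewrite lt_r.
- by move: (ltP_asym ordP qP rP lt_q); rewrite lt_r.
- by move: (ltP_asym ordP pP sP lt_p); rewrite lt_s.
by move: (ltP_asym ordP qP sP lt_q); rewrite lt_s.
Qed.

Lemma reduces_to_zero_lead_dvd (S : polyS K) M : is_lead P ltP S M ->
  reduces_to_zero P ltP S ->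
  exists a b w, inner_interval P a b /\ M = mulcm w (lead_mon P ltP (minor2 K a b)).
Proof.
move=> leadM [n [h [g [gG hS eq_S std]]]]; have lead_S := lead_monE ordP leadM.
case: leadM => M_in _.
have [t coef_t] : exists t, (h t * g t)@_M != 0.
  apply/existsP; apply: contraLR M_in => /existsPn coef0.
  by rewrite eq_S -mcoeff_neq0 negbK raddf_sum big1 // => t _; apply/eqP/negPn/coef0.
have hg_neq0 : h t * g t != 0 by apply: contraNneq coef_t => ->; rewrite mcoeff0.
have h_neq0 : h t != 0 by apply: contraNneq hg_neq0 => ->; rewrite mul0r.
have g_neq0 : g t != 0 by apply: contraNneq hg_neq0 => ->; rewrite mulr0.
have [a [b [inner_ab eq_g]]] := gG t.
have gS : in_S P (g t) by rewrite eq_g; apply: minor2_in_S.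
have lead_hg := lead_mon_mul ordP h_neq0 g_neq0 (hS t) gS.
exists a, b, (lead_mon P ltP (h t)); split => //; rewrite -eq_g.
case: (lead_hg) => _ /(_ M); rewrite -mcoeff_neq0 => /(_ coef_t) /orP[/eqP//|lt_M].
move: (std t hg_neq0); rewrite (lead_monE ordP lead_hg) lead_S => /orP[/eqP eq_M|lt_M'].
  by rewrite eq_M (negbTE (lex_lt_irr _ _ _)) in lt_M.
by move: (lex_lt_asym ordP lt_M); rewrite lt_M'.
Qed.

Lemma reduces_to_zero_telescope (M1 M2 M : monom) w s a0 b0 a1 b1 :
  inner_interval P a0 b0 -> inner_interval P a1 b1 -> w \in VP P -> s \in VP P ->
  mulcm (ucm w) (cm2 a0 b0) = M2 ->
  mulcm (ucm w) (antidiag a0 b0) = mulcm (ucm s) (cm2 a1 b1) ->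
  mulcm (ucm s) (antidiag a1 b1) = M1 ->
  lead_mon P ltP (mon K M1 - mon K M2) = M ->
  lex_le P ltP M2 M -> lex_le P ltP (mulcm (ucm s) (cm2 a1 b1)) M -> lex_le P ltP M1 M ->
  reduces_to_zero P ltP (mon K M1 - mon K M2).
Proof.
move=> inner0 inner1 wP sP eq2 eq_mid eq1 lead_M le2 le_mid le1.
pose h (t : 'I_2) : polyS K := if val t == 0%N then - var K w else - var K s.
pose g (t : 'I_2) : polyS K := if val t == 0%N then minor2 K a0 b0 else minor2 K a1 b1.
have hgS t : in_S P (h t * g t).
  by rewrite /h /g; case: ifP => _; apply: in_S_mul;
    solve [exact: in_S_oppvar | exact: minor2_in_S].
have hg_le t m : m \in msupp (h t * g t) -> lex_le P ltP m M.
  case: t => [[|[|//]]] lt_t; rewrite /h /g /= var_minor2E ?eq2 ?eq_mid ?eq1;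
    by case/msupp_binom => ->.
exists 2%N, h, g; split.
- by case=> [[|[|//]]] lt_t; rewrite /g /=; [exists a0, b0 | exists a1, b1].
- by case=> [[|[|//]]] lt_t; rewrite /h /=; apply: in_S_oppvar.
- by rewrite big_ord_recl big_ord1; symmetry; apply: minor2_telescope.
move=> t hg_neq0; rewrite lead_M.
by case: (lead_monP ordP hg_neq0 (hgS t)) => /hg_le.
Qed.

Lemma reduces_to_zero_lead_cm3 (S : polyS K) x y z : uniq [:: x; y; z] ->
  is_lead P ltP S (cm3 x y z) -> reduces_to_zero P ltP S ->
  exists a b, inner_interval P a b /\
    ([/\ a \in [:: x; y; z], b \in [:: x; y; z] & lex_lt P ltP (antidiag a b) (cm2 a b)] \/
     [/\ (a.1, b.2) \in [:: x; y; z], (b.1, a.2) \in [:: x; y; z] &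
         lex_lt P ltP (cm2 a b) (antidiag a b)]).
Proof.
move=> uniq_xyz lead_S red.
have [a [b [w [inner_ab eq_M]]]] := reduces_to_zero_lead_dvd lead_S red.
exists a, b; split=> //.
by have [[lead_ab lt_ab]|[lead_ab lt_ab]] := lead_minor2 inner_ab; rewrite lead_ab in eq_M;
  have [u_in v_in] := cm2_dvd_cm3 (esym eq_M) uniq_xyz; [left|right]; split.
Qed.

End MinorsAndReduction.

Section Configuration.

Variables (K : fieldType) (P : {fset vertex}) (ltP : rel vertex) (i j k l m n : int).
Hypotheses (lt_im : i < m) (lt_mk : m < k) (lt_jn : j < n) (lt_nl : n < l).
Hypotheses (inner_ab : inner_interval P (i, j) (k, l)) (ordP : P_order P ltP).

(* In the notation of the statement: a = (i, j), b = (k, l), delta = (m, n),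
   alpha = (i, n), beta = (m, l), d = (k, j), h = (m, j) and r = (k, n). *)
Local Notation mon1 := (cm3 (k, j) (i, n) (m, l)).
Local Notation mon2 := (cm3 (m, n) (i, j) (k, l)).
Local Notation spol := (mon K mon1 - mon K mon2).

Local Ltac box := rewrite /= ?inE ?xpair_eqE; lia.
Local Ltac cm_ac := apply/eqP/cmP => ?; rewrite /cm3 /antidiag /cm2 /= !mulcmE !ucmE; lia.

Lemma box_VP (x : vertex) : (i <= x.1 <= k) && (j <= x.2 <= l) -> x \in VP P.
Proof. by case/andP; apply: inner_interval_VP inner_ab. Qed.

Lemma box_inner (x y : vertex) : i <= x.1 -> x.1 < y.1 -> y.1 <= k ->
  j <= x.2 -> x.2 < y.2 -> y.2 <= l -> inner_interval P x y.
Proof. exact: inner_subinterval inner_ab. Qed.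

Lemma lex_lt_cm2_box (p q r s : vertex) : uniq [:: p; q; r; s] ->
  all [pred x : vertex | (i <= x.1 <= k) && (j <= x.2 <= l)] [:: p; q; r; s] ->
  lex_lt P ltP (cm2 s r) (cm2 p q) = (ltP r p && ltP s p) || (ltP r q && ltP s q).
Proof.
by move=> uniq_pqrs /and5P[/box_VP ? /box_VP ? /box_VP ? /box_VP ? _]; apply: lex_lt_cm2.
Qed.

(* spol = - x_b f_{a,delta} - x_alpha f_{h,b}, through x_alpha x_h x_b. *)
Lemma reduces_via_a_delta M : lead_mon P ltP spol = M ->
  lex_le P ltP mon2 M -> lex_le P ltP (mulcm (ucm (i, n)) (cm2 (m, j) (k, l))) M ->
  lex_le P ltP mon1 M -> reduces_to_zero P ltP spol.
Proof.
move=> lead_M le2 le_mid le1.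
apply: (reduces_to_zero_telescope ordP (w := (k, l)) (s := (i, n)) (a0 := (i, j)) (b0 := (m, n))
  (a1 := (m, j)) (b1 := (k, l)) _ _ _ _ _ _ _ lead_M le2 le_mid le1);
  [ apply: box_inner => /=; lia | apply: box_inner => /=; lia
  | apply: box_VP; box | apply: box_VP; box | cm_ac | cm_ac | cm_ac ].
Qed.

(* spol = - x_a f_{delta,b} - x_beta f_{a,r}, through x_beta x_a x_r. *)
Lemma reduces_via_delta_b M : lead_mon P ltP spol = M ->
  lex_le P ltP mon2 M -> lex_le P ltP (mulcm (ucm (m, l)) (cm2 (i, j) (k, n))) M ->
  lex_le P ltP mon1 M -> reduces_to_zero P ltP spol.
Proof.
move=> lead_M le2 le_mid le1.
apply: (reduces_to_zero_telescope ordP (w := (i, j)) (s := (m, l)) (a0 := (m, n)) (b0 := (k, l))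
  (a1 := (i, j)) (b1 := (k, n)) _ _ _ _ _ _ _ lead_M le2 le_mid le1);
  [ apply: box_inner => /=; lia | apply: box_inner => /=; lia
  | apply: box_VP; box | apply: box_VP; box | cm_ac | cm_ac | cm_ac ].
Qed.

Lemma reduces_to_zero_iff_lead_mon2 :
  lex_lt P ltP (cm2 (i, j) (k, l)) (antidiag (i, j) (k, l)) -> lex_lt P ltP mon1 mon2 ->
  reduces_to_zero P ltP spol <->
  ((ltP (m, j) (i, j) && ltP (i, n) (i, j)) || (ltP (m, j) (m, n) && ltP (i, n) (m, n))) \/
  ((ltP (k, n) (m, n) && ltP (m, l) (m, n)) || (ltP (k, n) (k, l) && ltP (m, l) (k, l))).
Proof.
move=> lt_ab lt12; rewrite -!lex_lt_cm2_box; try box.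
have lead2 := is_lead_binomr K lt12.
split=> [red|[lt_cond|lt_cond]].
- (* Any two of delta, a, b lie on a diagonal, so the minor is f_{a,delta},
     f_{delta,b} or f_{a,b}, the latter having its anti-diagonal leading term. *)
  have uniq2 : uniq [:: (m, n); (i, j); (k, l)] by box.
  have [[x1 y1] [[x2 y2] [[/= lt_x lt_y _] cases]]] := reduces_to_zero_lead_cm3 ordP uniq2 lead2 red.
  case: cases => -[]; rewrite /= !inE !xpair_eqE
    => /or3P[] /andP[/eqP ? /eqP ?] /or3P[] /andP[/eqP ? /eqP ?] lt; subst; try lia.
  + by right; exact: lt.
  + by left; exact: lt.
  by case/negP: (lex_lt_asym ordP lt_ab).
- apply: (reduces_via_a_delta (lead_monE ordP lead2)); [exact: lex_lexx | | exact: lex_ltW].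
  by apply/lex_ltW/(lex_lt_mull_eq (w := ucm (k, l)) _ _ lt_cond); cm_ac.
apply: (reduces_via_delta_b (lead_monE ordP lead2)); [exact: lex_lexx | | exact: lex_ltW].
by apply/lex_ltW/(lex_lt_mull_eq (w := ucm (i, j)) _ _ lt_cond); cm_ac.
Qed.

Lemma reduces_to_zero_iff_lead_mon1 :
  lex_lt P ltP (cm2 (i, n) (m, l)) (antidiag (i, n) (m, l)) -> lex_lt P ltP mon2 mon1 ->
  reduces_to_zero P ltP spol <->
  ((ltP (k, n) (i, n) && ltP (i, j) (i, n)) || (ltP (k, n) (k, j) && ltP (i, j) (k, j))) \/
  ((ltP (m, j) (k, j) && ltP (k, l) (k, j)) || (ltP (m, j) (m, l) && ltP (k, l) (m, l))).
Proof.
move=> lt_al lt21; rewrite -!lex_lt_cm2_box; try box.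
have lead1 := is_lead_binoml K lt21.
split=> [red|[lt_cond|lt_cond]].
- (* Among d, alpha, beta only alpha, beta lie on a diagonal, and {alpha, d},
     {beta, d} are the anti-diagonals of [a, r] and [h, b]. *)
  have uniq1 : uniq [:: (k, j); (i, n); (m, l)] by box.
  have [[x1 y1] [[x2 y2] [[/= lt_x lt_y _] cases]]] := reduces_to_zero_lead_cm3 ordP uniq1 lead1 red.
  case: cases => -[]; rewrite /= !inE !xpair_eqE
    => /or3P[] /andP[/eqP ? /eqP ?] /or3P[] /andP[/eqP ? /eqP ?] lt; subst; try lia.
  + by case/negP: (lex_lt_asym ordP lt_al).
  + by left; exact: lt.
  by right; rewrite [cm2 (k, l) _]cm2C [cm2 (k, j) _]cm2C; exact: lt.
- apply: (reduces_via_delta_b (lead_monE ordP lead1)); [exact: lex_ltW | | exact: lex_lexx].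
  by apply/lex_ltW/(lex_lt_mull_eq (w := ucm (m, l)) _ _ lt_cond); cm_ac.
apply: (reduces_via_a_delta (lead_monE ordP lead1)); [exact: lex_ltW | | exact: lex_lexx].
by apply/lex_ltW/(lex_lt_mull_eq (w := ucm (i, n)) _ _ lt_cond); cm_ac.
Qed.

Lemma lex_lt_mon12_total : lex_lt P ltP mon1 mon2 \/ lex_lt P ltP mon2 mon1.
Proof.
have cm3P x y z : (i <= x.1 <= k) && (j <= x.2 <= l) -> (i <= y.1 <= k) && (j <= y.2 <= l) ->
    (i <= z.1 <= k) && (j <= z.2 <= l) -> mon_in_VP P (cm3 x y z).
  move=> /box_VP ? /box_VP ? /box_VP ?.
  by apply: mon_in_VP_mul; [apply: mon_in_VP_cm2 | apply: mon_in_VP_ucm].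
apply/orP/(lex_lt_total ordP); try (apply: cm3P; box).
apply/eqP => /(congr1 (fun mo : monom => mo (k, j))).
by rewrite /cm3 /cm2 !mulcmE !ucmE; box.
Qed.

Lemma leads_antidiag_of_not_coprime :
  ~ coprime_mon (lead_mon P ltP (minor2 K (i, j) (k, l)))
                (lead_mon P ltP (minor2 K (i, n) (m, l))) ->
  [/\ lead_mon P ltP (minor2 K (i, j) (k, l)) = antidiag (i, j) (k, l),
      lead_mon P ltP (minor2 K (i, n) (m, l)) = antidiag (i, n) (m, l),
      lex_lt P ltP (cm2 (i, j) (k, l)) (antidiag (i, j) (k, l)) &
      lex_lt P ltP (cm2 (i, n) (m, l)) (antidiag (i, n) (m, l))].
Proof.
have inner_al : inner_interval P (i, n) (m, l) by apply: box_inner => /=; lia.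
have [[lead_ab lt_ab]|[lead_ab lt_ab]] := lead_minor2 K ordP inner_ab;
  have [[lead_al lt_al]|[lead_al lt_al]] := lead_minor2 K ordP inner_al; last by [].
all: erewrite lead_ab, lead_al; case; apply: coprime_cm2; box.
Qed.

End Configuration.

Theorem mainTheorem5 (K : fieldType) (P : {fset vertex}) (ltP : rel vertex)
    (i j k l m n : int) :
  P != fset0 ->
  i < m < k -> j < n < l ->
  inner_interval P (i, j) (k, l) ->
  P_order P ltP ->
  let a : vertex := (i, j) in
  let b : vertex := (k, l) in
  let delta : vertex := (m, n) in
  let alpha : vertex := (i, n) in
  let beta : vertex := (m, l) in
  let d : vertex := (k, j) in
  let h : vertex := (m, j) in
  let r : vertex := (k, n) in
  let fab : polyS K := minor2 K a b in
  let fal : polyS K := minor2 K alpha beta in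
  ~ coprime_mon (lead_mon P ltP fab) (lead_mon P ltP fal) ->
  let mon1 : monom := mulcm (mulcm (ucm d) (ucm alpha)) (ucm beta) in
  let mon2 : monom := mulcm (mulcm (ucm delta) (ucm a)) (ucm b) in
  reduces_to_zero P ltP (spoly P ltP fab fal) <->
  [\/ lex_lt P ltP mon1 mon2 /\
        ((ltP h a && ltP alpha a) || (ltP h delta && ltP alpha delta)),
      lex_lt P ltP mon1 mon2 /\
        ((ltP r delta && ltP beta delta) || (ltP r b && ltP beta b)),
      lex_lt P ltP mon2 mon1 /\
        ((ltP r alpha && ltP a alpha) || (ltP r d && ltP a d))
    | lex_lt P ltP mon2 mon1 /\
        ((ltP h d && ltP b d) || (ltP h beta && ltP b beta))].
Proof.
(* P is nonempty as soon as [a, b] is an inner interval. *)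
move=> _ /andP[lt_im lt_mk] /andP[lt_jn lt_nl] inner_ab ordP; cbv zeta => not_coprime.
have [lead_ab lead_al lt_ab lt_al] :=
  leads_antidiag_of_not_coprime lt_im lt_mk lt_jn lt_nl inner_ab ordP not_coprime.
have inner_al : inner_interval P (i, n) (m, l) by apply: (inner_subinterval inner_ab) => /=; lia.
have neq_d : (k, j) != (m, n) by rewrite xpair_eqE; lia.
rewrite (spoly_minor2_antidiag inner_ab inner_al erefl neq_d lead_ab lead_al) /=.
have [lt12|lt21] := lex_lt_mon12_total lt_im lt_mk lt_jn lt_nl inner_ab ordP.
- apply: (iff_trans (reduces_to_zero_iff_lead_mon2 K lt_im lt_mk lt_jn lt_nl inner_ab ordP
    lt_ab lt12)).
  have nlt21 := lex_lt_asym ordP lt12.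
  split=> [[c|c]|[[_ c]|[_ c]|[lt21 _]|[lt21 _]]];
    [exact: Or41 | exact: Or42 | by left | by right | |]; by case/negP: nlt21.
apply: (iff_trans (reduces_to_zero_iff_lead_mon1 K lt_im lt_mk lt_jn lt_nl inner_ab ordP
  lt_al lt21)).
have nlt12 := lex_lt_asym ordP lt21.
split=> [[c|c]|[[lt12 _]|[lt12 _]|[_ c]|[_ c]]];
  [exact: Or43 | exact: Or44 | | | by left | by right]; by case/negP: nlt12.
Qed.
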